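(* Let $T$ be a hypercyclic bounded operator on a separable Banach space $X$. For any $\alpha>0$, there exists a comeager set of vectors $x\in HC(T)$ such that $\overline{\mathrm{dens}}\,\mathcal N_T(x,B_\alpha)=c(T)$.
   Context: $HC(T)$ is the set of vectors with dense $T$-orbit. $\mathcal N_T(x,B)=\{i\in\mathbb N:T^ix\in B\}$; $\overline{\mathrm{dens}}(D)=\limsup_N\frac1N\#(D\cap[1,N])$; $B_R$ is the closed ball of radius $R$ centred at $0$. $c(T)=\sup_{R>0}\sup_{x\in HC(T)}\overline{\mathrm{dens}}\,\mathcal N_T(x,B_R)$. *)

From Stdlib Require Import Reals Lra Lia Classical ClassicalEpsilon ClassicalDescription.
Open Scope R_scope.

Record NormedSpace := {
  ns_car :> Type;
  ns_zero : ns_car;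
  ns_add : ns_car -> ns_car -> ns_car;
  ns_opp : ns_car -> ns_car;
  ns_scal : R -> ns_car -> ns_car;
  ns_norm : ns_car -> R;
  ns_addA : forall x y z, ns_add x (ns_add y z) = ns_add (ns_add x y) z;
  ns_addC : forall x y, ns_add x y = ns_add y x;
  ns_add0 : forall x, ns_add x ns_zero = x;
  ns_addN : forall x, ns_add x (ns_opp x) = ns_zero;
  ns_scalA : forall a b x, ns_scal a (ns_scal b x) = ns_scal (a * b) x;
  ns_scal1 : forall x, ns_scal 1 x = x;
  ns_scalDr : forall a x y, ns_scal a (ns_add x y) = ns_add (ns_scal a x) (ns_scal a y);
  ns_scalDl : forall a b x, ns_scal (a + b) x = ns_add (ns_scal a x) (ns_scal b x);
  ns_norm_eq0 : forall x, ns_norm x = 0 -> x = ns_zero;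
  ns_normZ : forall a x, ns_norm (ns_scal a x) = Rabs a * ns_norm x;
  ns_normD : forall x y, ns_norm (ns_add x y) <= ns_norm x + ns_norm y
}.

Arguments ns_zero {_}. Arguments ns_add {_}. Arguments ns_opp {_}.
Arguments ns_scal {_}. Arguments ns_norm {_}.

Definition dist {X : NormedSpace} (x y : X) : R := ns_norm (ns_add x (ns_opp y)).

Definition complete (X : NormedSpace) : Prop :=
  forall u : nat -> X,
    (forall eps, 0 < eps -> exists N, forall m n, (N <= m)%nat -> (N <= n)%nat ->
        dist (u m) (u n) < eps) ->
    exists l : X, forall eps, 0 < eps -> exists N, forall n, (N <= n)%nat -> dist (u n) l < eps.

Definition dense {X : NormedSpace} (A : X -> Prop) : Prop :=
  forall x eps, 0 < eps -> exists y, A y /\ dist x y < eps.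

Definition separable (X : NormedSpace) : Prop :=
  exists d : nat -> X, dense (fun y => exists n, y = d n).

Definition is_open {X : NormedSpace} (U : X -> Prop) : Prop :=
  forall x, U x -> exists eps, 0 < eps /\ forall y, dist x y < eps -> U y.

Definition comeager {X : NormedSpace} (A : X -> Prop) : Prop :=
  exists U : nat -> X -> Prop,
    (forall n, is_open (U n) /\ dense (U n)) /\
    (forall x, (forall n, U n x) -> A x).

Definition bounded_operator {X : NormedSpace} (T : X -> X) : Prop :=
  (forall x y, T (ns_add x y) = ns_add (T x) (T y)) /\
  (forall a x, T (ns_scal a x) = ns_scal a (T x)) /\
  (exists C, forall x, ns_norm (T x) <= C * ns_norm x).

Definition iterT {X : NormedSpace} (T : X -> X) (i : nat) (x : X) : X := Nat.iter i T x.

Definition HC {X : NormedSpace} (T : X -> X) (x : X) : Prop :=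
  dense (fun y => exists n : nat, y = iterT T n x).

Definition hypercyclic {X : NormedSpace} (T : X -> X) : Prop := exists x, HC T x.

Definition ball0 {X : NormedSpace} (R0 : R) (y : X) : Prop := ns_norm y <= R0.

Definition NT {X : NormedSpace} (T : X -> X) (x : X) (B : X -> Prop) (i : nat) : Prop :=
  B (iterT T i x).

Fixpoint count_upto (D : nat -> Prop) (N : nat) : nat :=
  match N with
  | O => O
  | S n => (if excluded_middle_informative (D (S n)) then 1 else 0) + count_upto D n
  end.

Definition is_limsup (u : nat -> R) (l : R) : Prop :=
  forall eps, 0 < eps ->
    (exists N, forall n, (N <= n)%nat -> u n < l + eps) /\
    (forall N, exists n, (N <= n)%nat /\ l - eps < u n).

(** upper density: limsup_N #(D ∩ [1,N]) / N (well-defined since the sequence lies in [0,1]) *)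
Definition updens (D : nat -> Prop) : R :=
  epsilon (inhabits 0)
    (fun l => is_limsup (fun N => INR (count_upto D N) / INR N) l).

Definition cT {X : NormedSpace} (T : X -> X) : R :=
  epsilon (inhabits 0)
    (is_lub (fun d => exists R0, 0 < R0 /\ exists x, HC T x /\ d = updens (NT T x (ball0 R0)))).

(* Let (d_p) be dense and c = c(T). The set U_n of vectors x such that the orbit of x
   comes 1/(n+1)-close to d_0, ..., d_n, and such that for some N >= n more than a
   fraction c - 1/(n+1) of T x, ..., T^N x lie in the open ball of radius alpha, is open
   because only finitely many iterates are involved. It is dense: rescaling a hypercyclic
   vector does not change its upper density of visits to proportionally rescaled balls,
   so some hypercyclic y has upper density of visits to B_(alpha/2) above c - 1/(n+1);
   every T^j y then lies in U_n, since a hypercyclic orbit returns near every point at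
   arbitrarily late times and shifting a set of times does not lower its upper density.
   A vector in every U_n is hypercyclic with upper density at least c, hence exactly c. *)
From Stdlib Require Import Reals Lra Lia ZArith Classical ClassicalEpsilon ClassicalDescription
  FunctionalExtensionality PropExtensionality.
From Coquelicot Require Import Rbar Lim_seq.
Open Scope R_scope.

Arguments ns_addA {_}. Arguments ns_addC {_}. Arguments ns_add0 {_}. Arguments ns_addN {_}.
Arguments ns_scalA {_}. Arguments ns_scal1 {_}. Arguments ns_scalDr {_}. Arguments ns_scalDl {_}.
Arguments ns_norm_eq0 {_}. Arguments ns_normZ {_}. Arguments ns_normD {_}.

Section NormedSpaceFacts.
Context {X : NormedSpace}.
Implicit Types x y z u : X.

Lemma ns_add_cancel_l x y z : ns_add x y = ns_add x z -> y = z.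
Proof.
  intros H.
  assert (E : ns_add (ns_opp x) (ns_add x y) = ns_add (ns_opp x) (ns_add x z)) by now rewrite H.
  rewrite !ns_addA, (ns_addC (ns_opp x) x), ns_addN, !(ns_addC ns_zero), !ns_add0 in E.
  exact E.
Qed.

Lemma ns_scal0 x : ns_scal 0 x = ns_zero.
Proof.
  apply (ns_add_cancel_l (ns_scal 0 x)).
  now rewrite <- ns_scalDl, Rplus_0_r, ns_add0.
Qed.

Lemma ns_opp_scal x : ns_opp x = ns_scal (-1) x.
Proof.
  apply (ns_add_cancel_l x). rewrite ns_addN.
  rewrite <- (ns_scal1 x) at 1. rewrite <- ns_scalDl, Rplus_opp_r.
  now rewrite ns_scal0.
Qed.

Lemma ns_norm0 : ns_norm (@ns_zero X) = 0.
Proof. rewrite <- (ns_scal0 ns_zero), ns_normZ, Rabs_R0. ring. Qed.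

Lemma ns_norm_opp x : ns_norm (ns_opp x) = ns_norm x.
Proof. rewrite ns_opp_scal, ns_normZ, Rabs_Zabs. simpl. ring. Qed.

Lemma ns_norm_ge0 x : 0 <= ns_norm x.
Proof.
  pose proof (ns_normD x (ns_opp x)) as H.
  rewrite ns_addN, ns_norm0, ns_norm_opp in H. lra.
Qed.

Lemma ns_norm_gt0 x : x <> ns_zero -> 0 < ns_norm x.
Proof.
  intros Hx. destruct (ns_norm_ge0 x) as [H|H]; [exact H|].
  now contradict Hx; apply ns_norm_eq0.
Qed.

Lemma ns_exists_norm x r : x <> ns_zero -> 0 <= r -> exists u, ns_norm u = r.
Proof.
  intros Hx Hr. pose proof (ns_norm_gt0 x Hx).
  exists (ns_scal (r / ns_norm x) x).
  rewrite ns_normZ, Rabs_pos_eq by (apply Rle_mult_inv_pos; lra). field. lra.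
Qed.

Lemma ns_scalK s x : s <> 0 -> ns_scal s (ns_scal (/ s) x) = x.
Proof. intros Hs. now rewrite ns_scalA, Rinv_r, ns_scal1. Qed.

Lemma dist_sym x y : dist x y = dist y x.
Proof.
  unfold dist. rewrite <- ns_norm_opp, !ns_opp_scal, ns_scalDr, ns_scalA.
  replace (-1 * -1) with 1 by ring. now rewrite ns_scal1, ns_addC.
Qed.

Lemma dist_triangle x y z : dist x z <= dist x y + dist y z.
Proof.
  unfold dist.
  replace (ns_add x (ns_opp z)) with (ns_add (ns_add x (ns_opp y)) (ns_add y (ns_opp z)));
    [apply ns_normD|].
  rewrite <- ns_addA, (ns_addA (ns_opp y)), (ns_addC (ns_opp y) y), ns_addN,
    (ns_addC ns_zero), ns_add0.
  reflexivity.
Qed.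

Lemma dist_refl x : dist x x = 0.
Proof. unfold dist. rewrite ns_addN. apply ns_norm0. Qed.

Lemma dist_add_l x u : dist (ns_add x u) x = ns_norm u.
Proof. unfold dist. now rewrite (ns_addC x u), <- ns_addA, ns_addN, ns_add0. Qed.

Lemma dist_scal s x y : dist (ns_scal s x) (ns_scal s y) = Rabs s * dist x y.
Proof.
  unfold dist. rewrite <- ns_normZ, ns_scalDr, !ns_opp_scal, !ns_scalA.
  now rewrite Rmult_comm.
Qed.

Lemma ns_norm_le_dist x y : ns_norm y <= ns_norm x + dist x y.
Proof.
  rewrite dist_sym. unfold dist.
  replace y with (ns_add x (ns_add y (ns_opp x))) at 1; [apply ns_normD|].
  now rewrite (ns_addC y), ns_addA, ns_addN, ns_addC, ns_add0.
Qed.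

Lemma is_open_ext (U V : X -> Prop) : (forall x, U x <-> V x) -> is_open U -> is_open V.
Proof.
  intros HUV HU x Hx. apply HUV in Hx.
  destruct (HU x Hx) as (eps & Heps & H).
  exists eps. split; [exact Heps|]. intros y Hy. now apply HUV, H.
Qed.

Lemma is_open_ball d r : is_open (fun y => dist d y < r).
Proof.
  intros x Hx. exists (r - dist d x). split; [lra|].
  intros y Hy. pose proof (dist_triangle d x y). lra.
Qed.

Lemma is_open_norm_lt a : is_open (fun y => ns_norm y < a).
Proof.
  intros x Hx. exists (a - ns_norm x). split; [lra|].
  intros y Hy. pose proof (ns_norm_le_dist x y). lra.
Qed.

Lemma is_open_and (U V : X -> Prop) : is_open U -> is_open V -> is_open (fun x => U x /\ V x).
Proof.
  intros HU HV x [Ux Vx].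
  destruct (HU x Ux) as (e1 & He1 & H1), (HV x Vx) as (e2 & He2 & H2).
  exists (Rmin e1 e2). split; [now apply Rmin_pos|].
  intros y Hy. split.
  - apply H1. eapply Rlt_le_trans; [exact Hy|apply Rmin_l].
  - apply H2. eapply Rlt_le_trans; [exact Hy|apply Rmin_r].
Qed.

Lemma is_open_impl (P : Prop) (U : X -> Prop) : is_open U -> is_open (fun x => P -> U x).
Proof.
  intros HU. destruct (classic P) as [HP|HP].
  - apply (is_open_ext U); [|exact HU]. tauto.
  - intros x _. exists 1. split; [lra|]. tauto.
Qed.

Lemma is_open_exists (U : nat -> X -> Prop) :
  (forall j, is_open (U j)) -> is_open (fun x => exists j, U j x).
Proof.
  intros HU x [j Hx]. destruct (HU j x Hx) as (eps & Heps & H).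
  exists eps. split; [exact Heps|]. intros y Hy. exists j. now apply H.
Qed.

Lemma is_open_forall_le (U : nat -> X -> Prop) N :
  (forall i, (i <= N)%nat -> is_open (U i)) ->
  is_open (fun x => forall i, (i <= N)%nat -> U i x).
Proof.
  induction N as [|N IH]; intros HU.
  - apply (is_open_ext (U 0%nat)); [|now apply HU].
    intros x; split; [intros Hx i Hi; now replace i with 0%nat by lia|].
    intros Hx; now apply Hx.
  - apply (is_open_ext (fun x => (forall i, (i <= N)%nat -> U i x) /\ U (S N) x)).
    + intros x; split; [intros [H1 H2] i Hi|intros H; split; intros; apply H; lia].
      destruct (Nat.eq_dec i (S N)) as [->|]; [exact H2|apply H1; lia].
    + apply is_open_and; [apply IH; intros; apply HU; lia|now apply HU].
Qed.

End NormedSpaceFacts.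
Section BoundedOperator.
Context {X : NormedSpace} (T : X -> X).
Hypothesis HT : bounded_operator T.

Lemma iterT_add i j x : iterT T i (iterT T j x) = iterT T (i + j) x.
Proof. unfold iterT. now rewrite Nat.iter_add. Qed.

Lemma iterT_scal j s x : iterT T j (ns_scal s x) = ns_scal s (iterT T j x).
Proof.
  destruct HT as (_ & HTs & _).
  induction j as [|j IH]; [reflexivity|]. simpl. now rewrite IH, HTs.
Qed.

Lemma iterT_sub j x y :
  iterT T j (ns_add x (ns_opp y)) = ns_add (iterT T j x) (ns_opp (iterT T j y)).
Proof.
  destruct HT as (HTa & HTs & _).
  induction j as [|j IH]; [reflexivity|]. simpl.
  now rewrite IH, HTa, !ns_opp_scal, HTs.
Qed.

Lemma iterT_bounded j : exists K, 0 < K /\ forall x, ns_norm (iterT T j x) <= K * ns_norm x.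
Proof.
  destruct HT as (_ & _ & C & HC).
  induction j as [|j (K & HK & IH)].
  - exists 1. split; [lra|]. intros x. simpl. lra.
  - exists ((Rabs C + 1) * K). split; [pose proof (Rabs_pos C); nra|].
    intros x. change (iterT T (S j) x) with (T (iterT T j x)).
    specialize (HC (iterT T j x)). specialize (IH x).
    pose proof (ns_norm_ge0 (iterT T j x)). pose proof (Rle_abs C). pose proof (Rabs_pos C).
    nra.
Qed.

Lemma iterT_continuous j x eps : 0 < eps ->
  exists delta, 0 < delta /\ forall y, dist x y < delta -> dist (iterT T j x) (iterT T j y) < eps.
Proof.
  intros Heps. destruct (iterT_bounded j) as (K & HK & Hb).
  exists (eps / K). split; [apply Rdiv_lt_0_compat; lra|].
  intros y Hy. unfold dist in *. rewrite <- iterT_sub.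
  eapply Rle_lt_trans; [apply Hb|].
  apply (Rmult_lt_compat_l K) in Hy; [|lra].
  replace (K * (eps / K)) with eps in Hy by (field; lra). exact Hy.
Qed.

Lemma is_open_preimage_iterT j (U : X -> Prop) :
  is_open U -> is_open (fun x => U (iterT T j x)).
Proof.
  intros HU x Hx. destruct (HU _ Hx) as (eps & Heps & H).
  destruct (iterT_continuous j x eps Heps) as (delta & Hdelta & Hc).
  exists delta. split; [exact Hdelta|]. intros y Hy. now apply H, Hc.
Qed.

Lemma HC_scal x s : s <> 0 -> HC T x -> HC T (ns_scal s x).
Proof.
  intros Hs Hx z eps Heps.
  assert (Hs' : 0 < Rabs s) by now apply Rabs_pos_lt.
  destruct (Hx (ns_scal (/ s) z) (eps / Rabs s)) as (y & [n ->] & Hy);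
    [now apply Rdiv_lt_0_compat|].
  exists (iterT T n (ns_scal s x)). split; [now exists n|].
  rewrite iterT_scal, <- (ns_scalK s z Hs), dist_scal.
  apply (Rmult_lt_compat_l (Rabs s)) in Hy; [|exact Hs'].
  replace (Rabs s * (eps / Rabs s)) with eps in Hy by (field; lra). exact Hy.
Qed.

Lemma NT_scal_ball0 x s r : 0 < s ->
  NT T (ns_scal s x) (ball0 (s * r)) = NT T x (ball0 r).
Proof.
  intros Hs. apply functional_extensionality; intros i.
  apply propositional_extensionality. unfold NT, ball0.
  rewrite iterT_scal, ns_normZ, Rabs_pos_eq by lra.
  split; intros H; [apply Rmult_le_reg_l in H|apply Rmult_le_compat_l]; lra.
Qed.

End BoundedOperator.
Lemma eventually_INR_gt r : exists K, forall n, (K <= n)%nat -> r < INR n.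
Proof.
  destruct (archimed r) as [Hup _].
  exists (Z.to_nat (up r)). intros n Hn. apply le_INR in Hn.
  destruct (Z.lt_ge_cases (up r) 0) as [Hneg|Hnn].
  - apply IZR_lt in Hneg. pose proof (pos_INR n). lra.
  - rewrite INR_IZR_INZ, Z2Nat.id in Hn by exact Hnn. lra.
Qed.

Lemma eventually_inv_succ_lt eps : 0 < eps ->
  exists K, forall n, (K <= n)%nat -> / (INR n + 1) < eps.
Proof.
  intros Heps. destruct (eventually_INR_gt (/ eps)) as [K HK].
  exists K. intros n Hn. specialize (HK n Hn). pose proof (pos_INR n).
  rewrite <- (Rinv_inv eps). apply Rinv_lt_contravar; [|lra].
  apply Rmult_lt_0_compat; [apply Rinv_0_lt_compat|]; lra.
Qed.

Lemma count_upto_le D N : (count_upto D N <= N)%nat.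
Proof.
  induction N as [|N IH]; simpl; [lia|].
  destruct (excluded_middle_informative (D (S N))); lia.
Qed.

Lemma count_upto_le_compat (D D' : nat -> Prop) N :
  (forall i, (i <= N)%nat -> D i -> D' i) -> (count_upto D N <= count_upto D' N)%nat.
Proof.
  induction N as [|N IH]; intros H; simpl; [lia|].
  specialize (IH (fun i Hi => H i ltac:(lia))).
  destruct (excluded_middle_informative (D (S N))) as [HD|];
    destruct (excluded_middle_informative (D' (S N))) as [|HD']; try lia.
  exfalso. now apply HD', H.
Qed.

Lemma count_upto_shift D j N :
  (count_upto D (N + j) <= j + count_upto (fun i => D (i + j)%nat) N)%nat.
Proof.
  induction N as [|N IH]; simpl; [rewrite Nat.add_0_r; apply count_upto_le|].
  destruct (excluded_middle_informative (D (S (N + j))));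
    destruct (excluded_middle_informative (D (S N + j)%nat)); simpl in *; lia.
Qed.

Definition ratio (D : nat -> Prop) (N : nat) : R := INR (count_upto D N) / INR N.

Lemma ratio_bounds D N : 0 <= ratio D N <= 1.
Proof.
  unfold ratio. destruct N as [|N].
  - simpl. unfold Rdiv. rewrite Rinv_0. lra.
  - pose proof (le_INR _ _ (count_upto_le D (S N))).
    pose proof (lt_0_INR (S N) ltac:(lia)). pose proof (pos_INR (count_upto D (S N))).
    split; [apply Rle_mult_inv_pos; lra|].
    apply (Rmult_le_reg_r (INR (S N))); [lra|].
    unfold Rdiv. rewrite Rmult_assoc, Rinv_l; lra.
Qed.

Lemma ratio_le_compat (D D' : nat -> Prop) N :
  (forall i, (i <= N)%nat -> D i -> D' i) -> ratio D N <= ratio D' N.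
Proof.
  intros H. unfold ratio, Rdiv. apply Rmult_le_compat_r.
  - destruct N as [|N]; [simpl; rewrite Rinv_0; lra|].
    left. apply Rinv_0_lt_compat, lt_0_INR. lia.
  - now apply le_INR, count_upto_le_compat.
Qed.

Lemma updens_spec D : is_limsup (ratio D) (updens D).
Proof.
  unfold updens. apply epsilon_spec.
  destruct (ex_LimSup_seq (ratio D)) as [[l| |] Hl].
  - exists l. intros eps Heps. destruct (Hl (mkposreal eps Heps)) as [Hfreq Hev].
    split; [exact Hev|]. exact Hfreq.
  - destruct (Hl 2 0%nat) as (n & _ & Hn). pose proof (ratio_bounds D n). lra.
  - destruct (Hl 0) as [N HN]. specialize (HN N (le_n N)). pose proof (ratio_bounds D N). lra.
Qed.

Lemma updens_le1 D : updens D <= 1.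
Proof.
  apply Rnot_lt_le. intros H.
  destruct (updens_spec D ((updens D - 1) / 2) ltac:(lra)) as [_ Hfreq].
  destruct (Hfreq 0%nat) as (n & _ & Hn). pose proof (ratio_bounds D n). lra.
Qed.

Lemma updens_ge_frequently l D :
  (forall n, exists N, (n <= N)%nat /\ l - / (INR n + 1) < ratio D N) -> l <= updens D.
Proof.
  intros Hl. apply Rnot_lt_le. intros Hlt.
  destruct (updens_spec D ((l - updens D) / 2) ltac:(lra)) as [[N0 HN0] _].
  destruct (eventually_inv_succ_lt ((l - updens D) / 2) ltac:(lra)) as [K HK].
  destruct (Hl (N0 + K)%nat) as (N & HN & Hr).
  specialize (HN0 N ltac:(lia)). specialize (HK (N0 + K)%nat ltac:(lia)). lra.
Qed.

Lemma ratio_shift_frequently l D : l < updens D ->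
  forall j n, exists N, (n <= N)%nat /\ l < ratio (fun i => D (i + j)%nat) N.
Proof.
  intros Hl j n. set (eps := (updens D - l) / 2).
  destruct (eventually_INR_gt (INR j / eps)) as [K HK].
  destruct (updens_spec D eps ltac:(unfold eps; lra)) as [_ Hfreq].
  destruct (Hfreq (n + j + 1 + K)%nat) as (m & Hm & Hr).
  exists (m - j)%nat. split; [lia|].
  assert (Hcount := le_INR _ _ (count_upto_shift D j (m - j))).
  replace (m - j + j)%nat with m in Hcount by lia. rewrite plus_INR in Hcount.
  assert (Hmj : INR (m - j) = INR m - INR j) by (rewrite minus_INR; [reflexivity|lia]).
  assert (Hpos : 0 < INR (m - j)) by (apply lt_0_INR; lia).
  assert (Hjm : INR j < eps * INR m).
  { specialize (HK m ltac:(lia)). apply (Rmult_lt_compat_l eps) in HK; [|unfold eps; lra].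
    replace (eps * (INR j / eps)) with (INR j) in HK by (field; unfold eps; lra). exact HK. }
  unfold ratio in *. apply (Rmult_lt_reg_r (INR (m - j))); [exact Hpos|].
  unfold Rdiv. rewrite Rmult_assoc, Rinv_l, Rmult_1_r by lra.
  assert (Hm0 : 0 < INR m) by (apply lt_0_INR; lia).
  apply (Rmult_lt_compat_r (INR m)) in Hr; [|exact Hm0].
  unfold Rdiv in Hr. rewrite Rmult_assoc, Rinv_l, Rmult_1_r in Hr by lra.
  pose proof (pos_INR (count_upto (fun i => D (i + j)%nat) (m - j))).
  assert (Hle : updens D - eps = l + eps) by (unfold eps; field).
  rewrite Hle in Hr. rewrite Hmj.
  destruct (Rle_or_lt 0 l) as [Hl0|Hl0].
  - assert (0 <= l * INR j) by (apply Rmult_le_pos; [exact Hl0|apply pos_INR]).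
    rewrite Rmult_plus_distr_r in Hr. rewrite Rmult_minus_distr_l. lra.
  - assert (l * (INR m - INR j) < 0) by (apply Rmult_neg_pos; lra). lra.
Qed.
Section Orbits.
Context {X : NormedSpace} (T : X -> X).

Lemma dense_of_orbit y (A : X -> Prop) : HC T y -> (forall j, A (iterT T j y)) -> dense A.
Proof.
  intros Hy HA z eps Heps. destruct (Hy z eps Heps) as (w & [j ->] & Hw).
  now exists (iterT T j y).
Qed.

Lemma HC_frequently_near x0 : HC T x0 ->
  forall i d r, 0 < r -> exists j, (i <= j)%nat /\ dist d (iterT T j x0) < r.
Proof.
  intros Hx0.
  destruct (classic (exists e : X, e <> ns_zero)) as [[e He]|Htriv].
  2:{ intros i d r Hr. exists i. split; [lia|].
      assert (Hz : forall w : X, w = ns_zero).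
      { intros w. apply NNPP. intros Hw. apply Htriv. now exists w. }
      rewrite (Hz d), (Hz (iterT T i x0)), dist_refl. lra. }
  induction i as [|i IH]; intros d r Hr.
  - destruct (Hx0 d r Hr) as (y & [n ->] & Hy). exists n. split; [lia|exact Hy].
  - (* Two targets at distance r/2 cannot both be approximated within r/4 by the
       single point of time i, so one of the approximations happens after time i. *)
    destruct (ns_exists_norm e (r / 2) He ltac:(lra)) as [u Hu].
    destruct (IH d (r / 4) ltac:(lra)) as (j1 & Hj1 & H1).
    destruct (IH (ns_add d u) (r / 4) ltac:(lra)) as (j2 & Hj2 & H2).
    assert (Hdu : dist d (ns_add d u) = r / 2) by now rewrite dist_sym, dist_add_l.
    destruct (Nat.eq_dec j1 i) as [->|]; [|exists j1; split; [lia|lra]].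
    destruct (Nat.eq_dec j2 i) as [->|].
    + pose proof (dist_triangle d (iterT T i x0) (ns_add d u)).
      rewrite (dist_sym (iterT T i x0)) in *. lra.
    + exists j2. split; [lia|]. pose proof (dist_triangle d (ns_add d u) (iterT T j2 x0)). lra.
Qed.

End Orbits.

Definition ball_visit_densities {X : NormedSpace} (T : X -> X) (d : R) : Prop :=
  exists R0, 0 < R0 /\ exists x, HC T x /\ d = updens (NT T x (ball0 R0)).

Lemma cT_is_lub {X : NormedSpace} (T : X -> X) :
  hypercyclic T -> is_lub (ball_visit_densities T) (cT T).
Proof.
  intros [x0 Hx0]. unfold cT. apply epsilon_spec.
  destruct (completeness (ball_visit_densities T)) as [m Hm]; [| |now exists m].
  - exists 1. intros d (R0 & _ & x & _ & ->). apply updens_le1.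
  - exists (updens (NT T x0 (ball0 1))), 1. split; [lra|]. now exists x0.
Qed.

Lemma cT_approx {X : NormedSpace} (T : X -> X) (HT : bounded_operator T) alpha :
  hypercyclic T -> 0 < alpha -> forall eps, 0 < eps ->
  exists y, HC T y /\ cT T - eps < updens (NT T y (ball0 alpha)).
Proof.
  intros Hhyp Halpha eps Heps. destruct (cT_is_lub T Hhyp) as [_ Hleast].
  destruct (classic (exists d, ball_visit_densities T d /\ cT T - eps < d))
    as [(d & (R0 & HR0 & x & Hx & ->) & Hd)|Hno].
  - exists (ns_scal (alpha / R0) x). split.
    + apply HC_scal; [exact HT| |exact Hx]. apply Rgt_not_eq, Rdiv_lt_0_compat; lra.
    + replace alpha with (alpha / R0 * R0) at 2 by (field; lra).
      rewrite NT_scal_ball0; [exact Hd|exact HT|apply Rdiv_lt_0_compat; lra].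
  - exfalso. assert (cT T <= cT T - eps); [|lra].
    apply Hleast. intros d Hd. apply Rnot_lt_le. intros Hlt. apply Hno. now exists d.
Qed.

Section ResidualSet.
Context {X : NormedSpace} (T : X -> X) (alpha c : R) (dseq : nat -> X).
Hypothesis HT : bounded_operator T.

Definition orbit_meets_dseq (n : nat) (x : X) : Prop :=
  forall p, (p <= n)%nat -> exists j, dist (dseq p) (iterT T j x) < / (INR n + 1).

Definition open_ball_visits (x : X) (i : nat) : Prop := ns_norm (iterT T i x) < alpha.

Definition open_ball_ratio_large (n : nat) (x : X) : Prop :=
  exists N, (n <= N)%nat /\ c - / (INR n + 1) < ratio (open_ball_visits x) N.

Lemma is_open_orbit_meets_dseq n : is_open (orbit_meets_dseq n).
Proof.
  apply is_open_forall_le. intros p _.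
  apply (is_open_exists (fun j x => dist (dseq p) (iterT T j x) < / (INR n + 1))). intros j.
  exact (is_open_preimage_iterT T HT j _ (is_open_ball (dseq p) _)).
Qed.

Lemma is_open_open_ball_ratio_large n : is_open (open_ball_ratio_large n).
Proof.
  intros x (N & HN & Hr).
  set (O := fun y => forall i, (i <= N)%nat -> open_ball_visits x i -> open_ball_visits y i).
  assert (HO : is_open O).
  { apply is_open_forall_le. intros i _. apply is_open_impl.
    exact (is_open_preimage_iterT T HT i _ (is_open_norm_lt alpha)). }
  destruct (HO x (fun _ _ H => H)) as (eps & Heps & H).
  exists eps. split; [exact Heps|]. intros y Hy. exists N. split; [exact HN|].
  eapply Rlt_le_trans; [exact Hr|]. apply ratio_le_compat. exact (H y Hy).
Qed.

Lemma HC_of_orbit_meets_dseq x : dense (fun y => exists p, y = dseq p) ->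
  (forall n, orbit_meets_dseq n x) -> HC T x.
Proof.
  intros Hdense Hx z eps Heps.
  destruct (Hdense z (eps / 2) ltac:(lra)) as (y & [p ->] & Hy).
  destruct (eventually_inv_succ_lt (eps / 2) ltac:(lra)) as [K HK].
  destruct (Hx (p + K)%nat p ltac:(lia)) as [j Hj].
  exists (iterT T j x). split; [now exists j|].
  specialize (HK (p + K)%nat ltac:(lia)).
  pose proof (dist_triangle z (dseq p) (iterT T j x)). lra.
Qed.

Lemma orbit_meets_dseq_iterT y n : HC T y -> forall j, orbit_meets_dseq n (iterT T j y).
Proof.
  intros Hy j p _.
  destruct (HC_frequently_near T y Hy j (dseq p) _ (RinvN_pos n)) as (k & Hk & Hd).
  exists (k - j)%nat. rewrite iterT_add. now replace (k - j + j)%nat with k by lia.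
Qed.

Lemma open_ball_ratio_large_iterT y n : 0 < alpha ->
  c - / (INR n + 1) < updens (NT T y (ball0 (alpha / 2))) ->
  forall j, open_ball_ratio_large n (iterT T j y).
Proof.
  intros Halpha Hy j.
  destruct (ratio_shift_frequently _ _ Hy j n) as (N & HN & Hr).
  exists N. split; [exact HN|]. eapply Rlt_le_trans; [exact Hr|].
  apply ratio_le_compat. intros i _. unfold NT, ball0, open_ball_visits.
  rewrite iterT_add. lra.
Qed.

Lemma updens_ge_of_open_ball_ratio_large x :
  (forall n, open_ball_ratio_large n x) -> c <= updens (NT T x (ball0 alpha)).
Proof.
  intros Hx. apply updens_ge_frequently. intros n. destruct (Hx n) as (N & HN & Hr).
  exists N. split; [exact HN|]. eapply Rlt_le_trans; [exact Hr|].
  apply ratio_le_compat. intros i _. unfold NT, ball0, open_ball_visits. lra.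
Qed.

End ResidualSet.

Theorem lemma4 (X : NormedSpace) (HXc : complete X) (HXs : separable X)
  (T : X -> X) (HT : bounded_operator T) (Hhyp : hypercyclic T)
  (alpha : R) (Halpha : 0 < alpha) :
  comeager (fun x : X => HC T x /\ updens (NT T x (ball0 alpha)) = cT T).
Proof.
  destruct HXs as [dseq Hdense].
  exists (fun n x => orbit_meets_dseq T dseq n x /\ open_ball_ratio_large T alpha (cT T) n x).
  split.
  - intros n. split.
    + apply is_open_and.
      * exact (is_open_orbit_meets_dseq T dseq HT n).
      * exact (is_open_open_ball_ratio_large T alpha (cT T) HT n).
    + destruct (cT_approx T HT (alpha / 2) Hhyp ltac:(lra) _ (RinvN_pos n)) as (y & Hy & Hc).
      apply (dense_of_orbit T y); [exact Hy|]. intros j. split.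
      * now apply orbit_meets_dseq_iterT.
      * now apply open_ball_ratio_large_iterT.
  - intros x Hx.
    assert (HCx : HC T x).
    { apply (HC_of_orbit_meets_dseq T dseq); [exact Hdense|]. intros n. apply Hx. }
    split; [exact HCx|]. apply Rle_antisym.
    + apply (cT_is_lub T Hhyp). exists alpha. split; [exact Halpha|]. now exists x.
    + apply updens_ge_of_open_ball_ratio_large. intros n. apply Hx.
Qed.
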